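(* Let $0 \le \eta \le 1$ and let $X$ be a Bernoulli random variable with $P_\theta(X=1) = 1 - P_\theta(X=0) = \theta$, where the parameter $\theta$ is known to lie in $\Omega = \{\theta : 0 \le \theta \le \eta\}$. Consider estimators $\delta(X)$ of $\theta$ (i.e., real-valued functions of $X$) under the squared error loss $L(\theta,d) = (\theta-d)^2$. Then a minimax estimator, i.e., an estimator $\delta$ minimizing $$\sup_{0\le\theta\le\eta} \mathbf{E}_\theta\big(\theta - \delta(X)\big)^2,$$ equivalently a pair of real numbers $(a,b)=(\delta(0),\delta(1))$ minimizing $$\sup_{0\le\theta\le\eta}\Big[(2a-2b+1)\theta^2 + (b^2-a^2-2a)\theta + a^2\Big],$$ is given by $$\delta(X=0) = a^* = \begin{cases} \sqrt{1-\eta} - (1-\eta) & \text{if } 0 \le \eta \le \tfrac34,\\ \tfrac14 & \text{if } \tfrac34 < \eta \le 1,\end{cases}$$ and $$\delta(X=1) = b^* = \min\{\eta, \tfrac34\} = \begin{cases} \eta & \text{if } \eta \le \tfrac34,\\ \tfrac34 & \text{if } \eta > \tfrac34.\end{cases}$$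
   Context: Based on a single observation $X$ (sample size $n=1$). An estimator is determined by its two values $\delta(0)=a$ and $\delta(1)=b$, and its risk is $\mathbf{E}_\theta(\theta-\delta(X))^2 = (\theta-a)^2(1-\theta) + (\theta-b)^2\theta$. *)

From HB Require Import structures.
From mathcomp Require Import all_boot all_order all_algebra.
From mathcomp Require Import classical_sets reals.
Set Implicit Arguments. Unset Strict Implicit. Unset Printing Implicit Defensive.
Import Order.TTheory GRing.Theory Num.Theory.
Local Open Scope ring_scope.
Local Open Scope classical_set_scope.

(* An estimator based on one Bernoulli observation X in {0,1}:
   delta false = delta(0), delta true = delta(1). *)
Definition estimator (R : realType) := bool -> R.

Definition bern_prob (R : realType) (theta : R) (x : bool) : R :=
  if x then theta else 1 - theta.

Definition risk (R : realType) (delta : estimator R) (theta : R) : R :=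
  bern_prob theta false * (theta - delta false) ^+ 2
  + bern_prob theta true * (theta - delta true) ^+ 2.

Definition max_risk (R : realType) (eta : R) (delta : estimator R) : R :=
  sup [set r | exists theta : R, 0 <= theta <= eta /\ r = risk delta theta].

Definition minimax (R : realType) (eta : R) (delta : estimator R) : Prop :=
  forall delta' : estimator R, max_risk eta delta <= max_risk eta delta'.

Definition a_star (R : realType) (eta : R) : R :=
  if eta <= 3 / 4 then Num.sqrt (1 - eta) - (1 - eta) else 1 / 4.

Definition b_star (R : realType) (eta : R) : R := Num.min eta (3 / 4).

Definition delta_star (R : realType) (eta : R) : estimator R :=
  fun x => if x then b_star eta else a_star eta.

(** Put [b = min eta 3/4] and [s = sqrt (1 - b)], so that [s >= 1/2]; in both
    regimes the proposed estimator is [(s (1 - s), 1 - s^2)]. Its risk at [t]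
    is [(s (1 - s))^2 + (2 s - 1) t (t - b)], hence at most [(s (1 - s))^2] on
    [[0, eta]] (for [eta > 3/4] because then [s = 1/2]), with equality at [0]
    and [b]. Any estimator [(a, b')] has risk at least [(s (1 - s))^2] at one
    of these two points: at [0] the risk is [a^2], and if [|a| < s (1 - s)]
    the risk at [b] is at least [s^2 (b - a)^2 > s^2 (1 - s)^2]. *)
From HB Require Import structures.
From mathcomp Require Import all_boot all_order all_algebra.
From mathcomp Require Import boolp classical_sets reals.
From mathcomp Require Import ring lra.
Set Implicit Arguments. Unset Strict Implicit. Unset Printing Implicit Defensive.
Import Order.TTheory GRing.Theory Num.Theory.
Local Open Scope ring_scope.

Section MaxRisk.
Variable R : realType.
Implicit Types (d : estimator R) (eta t V : R).

Lemma risk_le_sqr_sum d t : 0 <= t <= 1 ->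
  risk d t <= 2 * (1 + d false ^+ 2 + d true ^+ 2).
Proof.
case/andP=> t0 t1; rewrite /risk /bern_prob /=.
have sqr_sub_le x : (t - x) ^+ 2 <= 2 * (1 + x ^+ 2).
  have : 0 <= (t + x) ^+ 2 by exact: sqr_ge0.
  nra.
have := sqr_sub_le (d false); have := sqr_sub_le (d true).
nra.
Qed.

Lemma risk_le_max_risk eta d t : eta <= 1 -> 0 <= t <= eta ->
  risk d t <= max_risk eta d.
Proof.
move=> eta1 ht; apply: ub_le_sup; last by exists t.
exists (2 * (1 + d false ^+ 2 + d true ^+ 2)) => _ [u [/andP[u0 ueta] ->]].
by apply: risk_le_sqr_sum; rewrite u0 (le_trans ueta eta1).
Qed.

Lemma max_risk_le eta d V : 0 <= eta ->
  (forall t, 0 <= t <= eta -> risk d t <= V) -> max_risk eta d <= V.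
Proof.
move=> eta0 riskV; apply: ge_sup; first by exists (risk d 0), 0; rewrite lexx.
by move=> _ [t [ht ->]]; exact: riskV.
Qed.

End MaxRisk.

Section RootEstimator.
Variable R : realType.
Implicit Types (d : estimator R) (s t : R).

Definition root_estimator s : estimator R :=
  fun x => if x then 1 - s ^+ 2 else s * (1 - s).

Lemma risk_root_estimator s t :
  risk (root_estimator s) t
  = (s * (1 - s)) ^+ 2 + (2 * s - 1) * t * (t - (1 - s ^+ 2)).
Proof. by rewrite /risk /bern_prob /root_estimator /=; ring. Qed.

Lemma risk_root_estimator_le s t :
  (2 * s - 1) * (t - (1 - s ^+ 2)) <= 0 -> 0 <= t ->
  risk (root_estimator s) t <= (s * (1 - s)) ^+ 2.
Proof.
move=> slope t0; rewrite risk_root_estimator gerDl mulrAC.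
exact: mulr_le0_ge0.
Qed.

Lemma risk_ge_two_point s d : 0 <= s <= 1 ->
  exists2 t, t = 0 \/ t = 1 - s ^+ 2 & (s * (1 - s)) ^+ 2 <= risk d t.
Proof.
case/andP=> s0 s1; set a := d false.
have c0 : 0 <= s * (1 - s) by apply: mulr_ge0; lra.
have [ca | ac] := lerP ((s * (1 - s)) ^+ 2) (a ^+ 2).
  by exists 0; [left | rewrite /risk /bern_prob /= -/a; lra].
exists (1 - s ^+ 2); first by right.
have a_lt : a < s * (1 - s) by case: (lerP (s * (1 - s)) a) => // ca; nra.
have : (1 - s) ^+ 2 <= (1 - s ^+ 2 - a) ^+ 2 by rewrite lerXn2r ?nnegrE; nra.
have : 0 <= (1 - s ^+ 2) * (1 - s ^+ 2 - d true) ^+ 2.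
  by apply: mulr_ge0; [nra | exact: sqr_ge0].
rewrite /risk /bern_prob /= -/a; nra.
Qed.

End RootEstimator.

Section DeltaStar.
Variables (R : realType) (eta : R).
Hypotheses (eta0 : 0 <= eta) (eta1 : eta <= 1).

Let s := Num.sqrt (1 - b_star eta).

Lemma b_star_ge0 : 0 <= b_star eta.
Proof. by rewrite /b_star le_min eta0; lra. Qed.

Lemma b_star_le : b_star eta <= eta.
Proof. by rewrite /b_star ge_min lexx. Qed.

Lemma one_sub_sqr_sqrt_b_star : 1 - s ^+ 2 = b_star eta.
Proof.
by rewrite sqr_sqrtr ?subr_ge0; [ring | exact: le_trans b_star_le eta1].
Qed.

Lemma sqrt_b_star_ge_half : 1 / 2 <= s.
Proof.
have -> : 1 / 2 = Num.sqrt ((1 / 2) ^+ 2) :> R.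
  by rewrite sqrtr_sqr ger0_norm //; lra.
have b_le : b_star eta <= 3 / 4 by rewrite /b_star ge_min lexx orbT.
by rewrite ler_sqrt; lra.
Qed.

Lemma delta_star_root : delta_star eta = root_estimator s.
Proof.
apply: funext => -[]; rewrite /delta_star /root_estimator /=.
  by rewrite one_sub_sqr_sqrt_b_star.
rewrite /s /a_star /b_star; case: leP => eta_le.
  by rewrite -{2}[1 - eta]sqr_sqrtr ?subr_ge0 //; ring.
have -> : 1 - 3 / 4 = (1 / 2) ^+ 2 :> R by field.
by rewrite sqrtr_sqr ger0_norm; [field | lra].
Qed.

Lemma delta_star_slope_le0 t : t <= eta ->
  (2 * s - 1) * (t - (1 - s ^+ 2)) <= 0.
Proof.
move=> t_le; have s_ge := sqrt_b_star_ge_half.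
have s2 := one_sub_sqr_sqrt_b_star; rewrite s2.
have [t_le_b | b_lt_t] := lerP t (b_star eta).
  by apply: mulr_ge0_le0; lra.
have b_eq : b_star eta = 3 / 4.
  by move: b_lt_t; rewrite /b_star; case: (leP eta (3 / 4)) => //; lra.
have -> : 2 * s - 1 = 0 by rewrite b_eq in s2; nra.
by rewrite mul0r.
Qed.

End DeltaStar.

Theorem theorem1 (R : realType) (eta : R) (h0 : 0 <= eta) (h1 : eta <= 1) :
  minimax eta (delta_star eta).
Proof.
rewrite /minimax delta_star_root // => d.
set s := Num.sqrt _.
have s_ge : 1 / 2 <= s by exact: sqrt_b_star_ge_half.
have s2 : 1 - s ^+ 2 = b_star eta by exact: one_sub_sqr_sqrt_b_star.
apply: (@le_trans _ _ ((s * (1 - s)) ^+ 2)).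
  apply: max_risk_le => // t /andP[t0 t_le].
  exact: risk_root_estimator_le (delta_star_slope_le0 h1 t_le) t0.
have s01 : 0 <= s <= 1 by have := b_star_ge0 h0; rewrite -s2 => ?; nra.
have [t t_pts risk_t] := risk_ge_two_point d s01.
apply: le_trans risk_t (risk_le_max_risk d h1 _).
by case: t_pts => ->; rewrite ?s2 ?b_star_ge0 ?b_star_le ?lexx.
Qed.
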